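(* For an integer $l\ge1$ and a variable $x$, put $X=x+\frac1x$ and $X^{(l)}=x^l+\frac1{x^l}$. Then $$X^{(l)}=\sum_{j=0}^{\lfloor l/2\rfloor}(-1)^j\dim\mathcal{H}^j(\mathbb{R}^{l+2-2j})\,X^{l-2j}.$$
   Context: $\mathcal{H}^j(\mathbb{R}^d)$ is the space of harmonic homogeneous polynomials of degree $j$ in $d$ real variables (so $\dim\mathcal{H}^0(\mathbb{R}^1)=\dim\mathcal{H}^1(\mathbb{R}^1)=1$ and $\dim\mathcal{H}^j(\mathbb{R}^1)=0$ for $j\ge2$). *)

From HB Require Import structures.
From mathcomp Require Import all_boot all_order all_algebra.
From mathcomp Require Import mpoly.
From mathcomp Require Import reals.
From Stdlib Require Import ClassicalEpsilon.
Set Implicit Arguments. Unset Strict Implicit. Unset Printing Implicit Defensive.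
Import Order.TTheory GRing.Theory Num.Theory.
Local Open Scope ring_scope.

Definition laplacian (R : ringType) (d : nat) (p : {mpoly R[d]}) : {mpoly R[d]} :=
  \sum_(i < d) p^`M(i, 2).

Definition harmonic_homog (R : ringType) (d j : nat) : pred {mpoly R[d]} :=
  fun p => (p \is j.-homog) && (laplacian p == 0).

Definition has_dim (R : ringType) (V : lmodType R) (S : pred V) (n : nat) : Prop :=
  exists b : 'I_n -> V,
    [/\ forall i, S (b i),
        forall c : 'I_n -> R, \sum_(i < n) c i *: b i = 0 -> forall i, c i = 0
      & forall v, S v -> exists c : 'I_n -> R, v = \sum_(i < n) c i *: b i].

Definition dimH (R : realType) (j d : nat) : nat :=
  epsilon (inhabits 0%N) (fun n => has_dim (@harmonic_homog R d j) n).

(* The Laplacian maps the homogeneous polynomials of degree j in d >= 1 variables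
   onto those of degree j - 2: in the basis x^m / m! its transpose is
   multiplication by |x|^2, which is injective.  Counting monomials then gives
   dim H^j(R^(k+2)) = C(k+1+j, k+1) - C(k-1+j, k+1), i.e. C(k+j+1, j+1) + C(k+j, j)
   in degree j + 1.  On the other side, with X = x + 1/x, both x^l + x^-l and
   U_l - U_(l-2), where U_l = sum_j (-1)^j C(l-j, j) X^(l-2j), satisfy
   V_(l+2) = X V_(l+1) - V_l, and Pascal's rule identifies the coefficients of
   U_l - U_(l-2) with these dimensions. *)
From HB Require Import structures.
From mathcomp Require Import all_boot all_order all_algebra.
From mathcomp Require Import mpoly.
From mathcomp Require Import reals.
From mathcomp Require Import ring zify.
From Stdlib Require Import ClassicalEpsilon.
Set Implicit Arguments. Unset Strict Implicit. Unset Printing Implicit Defensive.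
Import Order.TTheory GRing.Theory Num.Theory.

Lemma card_mdeg_eq (m b j : nat) : j < b ->
  #|[pred x : 'X_{1..m.+1 < b} | mdeg (bmnm x) == j]| = 'C(m + j, m).
Proof.
move=> jb; rewrite -card_ord_partitions.
pose g (x : 'X_{1..m.+1 < b}) : m.+1.-tuple 'I_j.+1 :=
  [tuple (inord (bmnm x i)) | i < m.+1].
have le_j (x : 'X_{1..m.+1 < b}) : mdeg (bmnm x) == j -> forall i, bmnm x i < j.+1.
  by move=> /eqP <- i; rewrite ltnS mdegE (bigD1 i) //= leq_addr.
transitivity #|g @: [pred x | mdeg (bmnm x) == j]|.
  apply/esym/card_in_imset => x y hx hy e; apply/val_inj/mnmP => i.
  have := congr1 (fun t => nat_of_ord (tnth t i)) e; rewrite !tnth_mktuple.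
  by rewrite !inordK ?le_j.
congr (#|pred_of_set _|); apply/setP => t; rewrite inE; apply/imsetP/idP.
- case=> x hx ->; rewrite big_tuple.
  under eq_bigr => i _ do rewrite tnth_mktuple inordK ?le_j //.
  by rewrite -mdegE.
- move=> ht.
  have tsum : (\sum_(i < m.+1) nat_of_ord (tnth t i)) = j.
    by move: ht; rewrite big_tuple => /eqP.
  have hd : mdeg [multinom val (tnth t i) | i < m.+1] < b.
    by rewrite mdegE; under eq_bigr => i _ do rewrite mnmE; rewrite tsum.
  exists (BMultinom hd).
    by rewrite inE /= mdegE; under eq_bigr => i _ do rewrite mnmE; rewrite tsum.
  apply: eq_from_tnth => i; rewrite tnth_mktuple /=; apply/val_inj => /=.
  by rewrite mnmE inordK.
Qed.

Local Open Scope ring_scope.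

Section HasDim.
Variables (F : fieldType) (V : lmodType F).

Lemma sum_scale_mulmx m n (v : 'rV[F]_m) (A : 'M[F]_(m, n)) (b : 'I_n -> V) :
  \sum_(i < n) (v *m A) 0 i *: b i =
  \sum_(k < m) v 0 k *: (\sum_(i < n) A k i *: b i).
Proof.
under eq_bigr => i _ do rewrite !mxE scaler_suml.
rewrite exchange_big /=; apply: eq_bigr => k _.
by rewrite scaler_sumr; apply: eq_bigr => i _; rewrite scalerA.
Qed.

Lemma leq_free_span (S : pred V) n m (b : 'I_n -> V) (b' : 'I_m -> V) :
  (forall v, S v -> exists c : 'I_n -> F, v = \sum_(i < n) c i *: b i) ->
  (forall i, S (b' i)) ->
  (forall c : 'I_m -> F, \sum_(i < m) c i *: b' i = 0 -> forall i, c i = 0) ->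
  (m <= n)%N.
Proof.
move=> span inS free; rewrite leqNgt; apply/negP => ltnm.
have coord k : {c : 'I_n -> F | b' k = \sum_(i < n) c i *: b i}.
  exact/constructive_indefinite_description/span.
pose A := \matrix_(k < m, i < n) sval (coord k) i.
have : kermx A != 0.
  rewrite kermx_eq0 /row_free; apply/negP => /eqP rA.
  by have := rank_leq_col A; rewrite rA leqNgt ltnm.
case/rowV0Pn => v /sub_kermxP vA; apply/negP; rewrite negbK.
have := sum_scale_mulmx v A b; rewrite vA.
under eq_bigr => i _ do rewrite mxE scale0r.
rewrite big1 // => /esym.
under eq_bigr => k _ do (under eq_bigr => i _ do rewrite mxE; rewrite -(svalP (coord k))).
by move=> /free v0; apply/eqP/rowP => k; rewrite mxE v0.
Qed.

Lemma has_dim_uniq (S : pred V) n m : has_dim S n -> has_dim S m -> n = m.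
Proof.
move=> [b [bS bfree bspan]] [b' [bS' bfree' bspan']]; apply/eqP; rewrite eqn_leq.
by rewrite (leq_free_span bspan' bS bfree) (leq_free_span bspan bS' bfree').
Qed.

Lemma has_dim_kermx (S : pred V) n k (e : 'I_n -> V) (L : 'M[F]_(n, k)) :
  (forall c : 'I_n -> F, \sum_(i < n) c i *: e i = 0 -> forall i, c i = 0) ->
  (forall v, S v <-> exists c : 'rV_n, v = \sum_(i < n) c 0 i *: e i /\ c *m L = 0) ->
  has_dim S (n - \rank L).
Proof.
move=> efree hS; rewrite -mxrank_ker.
set K := row_base (kermx L).
have KL : (K <= kermx L)%MS by rewrite eq_row_base.
exists (fun r => \sum_(i < n) K r i *: e i); split.
- move=> r; apply/hS; exists (row r K); split.
    by under [RHS]eq_bigr => i _ do rewrite mxE.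
  by apply/sub_kermxP; apply: submx_trans KL; apply: row_sub.
- move=> c hc; pose w : 'rV_(\rank (kermx L)) := \row_r c r.
  have : \sum_(i < n) (w *m K) 0 i *: e i = 0.
    by rewrite sum_scale_mulmx -[RHS]hc; apply: eq_bigr => r _; rewrite /w mxE.
  move/efree => wK0.
  have : w *m K = 0 by apply/rowP => i; rewrite wK0 mxE.
  move/eqP; rewrite mulmx_free_eq0 ?row_base_free // => /eqP w0 r.
  by have := congr1 (fun M : 'rV_(\rank (kermx L)) => M 0 r) w0; rewrite !mxE.
- move=> v /hS [c [-> cL]].
  have cK : (c <= K)%MS by rewrite eq_row_base; apply/sub_kermxP.
  exists (fun r => (c *m pinvmx K) 0 r).
  by rewrite -sum_scale_mulmx mulmxKpV.
Qed.

End HasDim.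

Lemma dimH_eq (R : realType) j d n :
  has_dim (@harmonic_homog R d j) n -> dimH R j d = n.
Proof.
move=> hn; have hex : exists n, has_dim (@harmonic_homog R d j) n by exists n.
exact: has_dim_uniq (epsilon_spec (inhabits 0%N) _ hex) hn.
Qed.

Section HarmonicDim.
Variables (R : numFieldType) (d j : nat).
Local Notation MP := {mpoly R[d]}.

(* [src] and [tgt] enumerate the monomials of degree [j] and [j - 2] (none if
   [j < 2]), so that polynomials in these degrees become row vectors. *)
Definition src_mono : pred 'X_{1..d < j.+1} := fun m => mdeg (bmnm m) == j.
Definition tgt_mono : pred 'X_{1..d < j.+1} := fun m => (mdeg (bmnm m)).+2 == j.
Definition nsrc := #|src_mono|.
Definition ntgt := #|tgt_mono|.
Definition src (a : 'I_nsrc) : 'X_{1..d} := bmnm (enum_val a).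
Definition tgt (b : 'I_ntgt) : 'X_{1..d} := bmnm (enum_val b).

Lemma mdeg_src a : mdeg (src a) = j.
Proof. exact/eqP/(enum_valP a). Qed.

Lemma mdeg_tgt b : (mdeg (tgt b)).+2 = j.
Proof. exact/eqP/(enum_valP b). Qed.

Lemma src_inj : injective src.
Proof. by move=> a a' /val_inj /enum_val_inj. Qed.

Lemma tgt_inj : injective tgt.
Proof. by move=> b b' /val_inj /enum_val_inj. Qed.

Lemma srcP m : mdeg m = j -> exists a, src a = m.
Proof.
move=> hm; have lt : (mdeg m < j.+1)%N by rewrite hm.
have xA : BMultinom lt \in src_mono by rewrite unfold_in /src_mono /= hm.
by exists (enum_rank_in xA (BMultinom lt)); rewrite /src enum_rankK_in.
Qed.

Lemma tgtP m : (mdeg m).+2 = j -> exists b, tgt b = m.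
Proof.
move=> hm; have lt : (mdeg m < j.+1)%N by rewrite -hm ltnS leqW.
have xA : BMultinom lt \in tgt_mono by rewrite unfold_in /tgt_mono /= hm.
by exists (enum_rank_in xA (BMultinom lt)); rewrite /tgt enum_rankK_in.
Qed.

Lemma mdeg_mulU2 (i : 'I_d) (m : 'X_{1..d}) : mdeg (U_(i) *+ 2 + m) = (mdeg m).+2.
Proof. by rewrite mdegD mdegMn mdeg1. Qed.

Lemma mcoeff_laplacian (q : MP) m :
  (laplacian q)@_m = \sum_(i < d) q@_(U_(i) *+ 2 + m) *+ ((m i).+2 * (m i).+1).
Proof.
rewrite /laplacian raddf_sum; apply: eq_bigr => i _ /=; rewrite mcoeff_mderivm.
congr (_ *+ _); rewrite (bigD1 i) //= big1 ?muln1.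
  by rewrite mnmDE mulmnE mnm1E eqxx mul1n add2n ffactnS ffactn1.
by move=> k ki; rewrite mulmnE mnm1E eq_sym (negbTE ki) mul0n ffactn0.
Qed.

Lemma laplacian_sum (I : finType) (c : I -> R) (q : I -> MP) :
  laplacian (\sum_(a : I) c a *: q a) = \sum_(a : I) c a *: laplacian (q a).
Proof.
rewrite /laplacian; under eq_bigr => i _ do rewrite raddf_sum.
rewrite exchange_big /=; apply: eq_bigr => a _.
by rewrite scaler_sumr; apply: eq_bigr => i _; rewrite linearZ.
Qed.

Lemma mcoeff_sum_src (f : 'I_nsrc -> R) m :
  (\sum_a f a *: ('X_[src a] : MP))@_m = \sum_a f a * (src a == m)%:R.
Proof. by rewrite raddf_sum; apply: eq_bigr => a _ /=; rewrite mcoeffZ mcoeffX. Qed.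

Lemma mcoeff_sum_tgt (f : 'I_ntgt -> R) m :
  (\sum_b f b *: ('X_[tgt b] : MP))@_m = \sum_b f b * (tgt b == m)%:R.
Proof. by rewrite raddf_sum; apply: eq_bigr => b _ /=; rewrite mcoeffZ mcoeffX. Qed.

Lemma sum_src_eq (f : 'I_nsrc -> R) a0 : \sum_a f a * (src a == src a0)%:R = f a0.
Proof.
rewrite (bigD1 a0) //= eqxx mulr1 big1 ?addr0 // => a ne.
by rewrite (inj_eq src_inj) (negbTE ne) mulr0.
Qed.

Lemma sum_tgt_eq (f : 'I_ntgt -> R) b0 : \sum_b f b * (tgt b == tgt b0)%:R = f b0.
Proof.
rewrite (bigD1 b0) //= eqxx mulr1 big1 ?addr0 // => b ne.
by rewrite (inj_eq tgt_inj) (negbTE ne) mulr0.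
Qed.

Lemma src_free (c : 'I_nsrc -> R) :
  \sum_a c a *: ('X_[src a] : MP) = 0 -> forall a, c a = 0.
Proof.
by move=> h a; have := congr1 (mcoeff (src a)) h; rewrite mcoeff_sum_src sum_src_eq mcoeff0.
Qed.

Lemma mcoeff_laplacianX a m :
  (laplacian ('X_[src a] : MP))@_m =
  \sum_(i < d) (src a == (U_(i) *+ 2 + m)%MM)%:R *+ ((m i).+2 * (m i).+1).
Proof. by rewrite mcoeff_laplacian; apply: eq_bigr => i _; rewrite mcoeffX. Qed.

Definition laplacian_mx : 'M[R]_(nsrc, ntgt) :=
  \matrix_(a, b) (laplacian ('X_[src a] : MP))@_(tgt b).

Lemma harmonic_homogP (p : MP) :
  harmonic_homog j p <->
  exists c : 'rV_nsrc, p = \sum_a c 0 a *: 'X_[src a] /\ c *m laplacian_mx = 0.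
Proof.
split.
- case/andP => hom /eqP lap0.
  have pE : p = \sum_a p@_(src a) *: 'X_[src a].
    apply/mpolyP => m; rewrite mcoeff_sum_src.
    have [/eqP/srcP [a0 <-]|hm] := boolP (mdeg m == j); first by rewrite sum_src_eq.
    rewrite (dhomog_nemf_coeff hom hm) big1 // => a _.
    by case: eqP => [e|_]; [move: hm; rewrite -e mdeg_src eqxx | rewrite mulr0].
  exists (\row_a p@_(src a)); split.
    by rewrite {1}pE; apply: eq_bigr => a _; rewrite mxE.
  apply/rowP => b; rewrite !mxE; have := congr1 (mcoeff (tgt b)) lap0.
  rewrite [in laplacian p]pE laplacian_sum raddf_sum mcoeff0 => h; rewrite -[RHS]h.
  by apply: eq_bigr => a _ /=; rewrite !mxE mcoeffZ.
- case=> c [-> cL]; apply/andP; split.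
    apply: rpred_sum => a _; apply: rpredZ.
    by rewrite dhomogX; apply/eqP; exact: mdeg_src.
  apply/eqP/mpolyP => m; rewrite laplacian_sum raddf_sum mcoeff0.
  have [/eqP/tgtP [b <-]|hm] := boolP ((mdeg m).+2 == j).
    have := congr1 (fun M : 'rV_ntgt => M 0 b) cL; rewrite !mxE => h; rewrite -[RHS]h.
    by apply: eq_bigr => a _ /=; rewrite mcoeffZ mxE.
  apply: big1 => a _; rewrite /= mcoeffZ mcoeff_laplacianX big1 ?mulr0 // => i _.
  case: eqP => [e|_]; last by rewrite mul0rn.
  by move: hm; rewrite -(mdeg_mulU2 i) -e mdeg_src eqxx.
Qed.

Definition mfact (m : 'X_{1..d}) : R := \prod_(k < d) ((m k)`!)%:R.

Lemma mfact_neq0 m : mfact m != 0.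
Proof. by apply/prodf_neq0 => k _; rewrite pnatr_eq0 -lt0n fact_gt0. Qed.

Lemma mfact_mulU2 i m :
  mfact (U_(i) *+ 2 + m)%MM = mfact m * ((m i).+2 * (m i).+1)%:R.
Proof.
rewrite /mfact (bigD1 i) //= [in RHS](bigD1 i) //=.
rewrite mnmDE mulmnE mnm1E eqxx mul1n add2n !factS.
rewrite (eq_bigr (fun k => ((m k)`!)%:R)) => [|k ki]; last first.
  by rewrite mnmDE mulmnE mnm1E eq_sym (negbTE ki).
by rewrite !natrM; ring.
Qed.

Definition sqnorm : MP := \sum_(i < d) 'X_[U_(i) *+ 2].

Lemma sqnorm_neq0 : (0 < d)%N -> sqnorm != 0.
Proof.
move=> d0; pose i0 := Ordinal d0.
apply/negP => /eqP h; have := congr1 (mcoeff (U_(i0) *+ 2)%MM) h.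
rewrite raddf_sum mcoeff0 (bigD1 i0) //= mcoeffX eqxx big1 ?addr0.
  by move/eqP; rewrite oner_eq0.
move=> i ne /=; rewrite mcoeffX; case: eqP => // e.
by have := congr1 (fun m : 'X_{1..d} => m i0) e; rewrite !mulmnE !mnm1E eqxx (negbTE ne).
Qed.

Lemma mcoeff_mul_sqnorm (f : 'I_ntgt -> R) m :
  ((\sum_b f b *: 'X_[tgt b]) * sqnorm)@_m =
  \sum_(i < d) \sum_b f b * (U_(i) *+ 2 + tgt b == m)%MM%:R.
Proof.
rewrite mulr_sumr raddf_sum; apply: eq_bigr => i _ /=.
rewrite mulr_suml raddf_sum; apply: eq_bigr => b _ /=.
by rewrite -scalerAl -mpolyXD mcoeffZ mcoeffX addmC.
Qed.

(* In the bases x^m / m!, the transpose of [laplacian_mx] is the matrix of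
   multiplication by [sqnorm]. *)
Lemma mfact_mcoeff_mul_sqnorm (u : 'rV[R]_ntgt) a :
  mfact (src a) *
    ((\sum_b (u 0 b / mfact (tgt b)) *: 'X_[tgt b]) * sqnorm)@_(src a) =
  (u *m laplacian_mx^T) 0 a.
Proof.
rewrite mcoeff_mul_sqnorm mxE mulr_sumr; under eq_bigr do rewrite mulr_sumr.
rewrite exchange_big /=.
apply: eq_bigr => b _; rewrite !mxE mcoeff_laplacianX !mulr_sumr.
apply: eq_bigr => i _; rewrite eq_sym.
case: eqP => [->|_]; last by rewrite !mulr0 mul0rn mulr0.
by rewrite mfact_mulU2 mulr1n mulr1; field; apply: mfact_neq0.
Qed.

Lemma rank_laplacian_mx : (0 < d)%N -> \rank laplacian_mx = ntgt.
Proof.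
move=> d0; rewrite -mxrank_tr; apply/eqP; apply: inj_row_free => u uL.
set q : MP := \sum_b (u 0 b / mfact (tgt b)) *: 'X_[tgt b].
have /eqP : q * sqnorm = 0.
  apply/mpolyP => m; rewrite mcoeff0.
  have [/eqP/srcP [a <-]|hm] := boolP (mdeg m == j).
    apply: (mulfI (mfact_neq0 (src a))).
    by rewrite mfact_mcoeff_mul_sqnorm uL mxE mulr0.
  rewrite mcoeff_mul_sqnorm big1 // => i _; apply: big1 => b _.
  case: eqP => [e|_]; last by rewrite mulr0.
  by move: hm; rewrite -e mdeg_mulU2 mdeg_tgt eqxx.
rewrite mulf_eq0 (negbTE (sqnorm_neq0 d0)) orbF => /eqP q0.
apply/rowP => b; have := congr1 (mcoeff (tgt b)) q0.
rewrite mcoeff_sum_tgt sum_tgt_eq mcoeff0 mxE => /eqP.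
by rewrite mulf_eq0 invr_eq0 (negbTE (mfact_neq0 _)) orbF => /eqP.
Qed.

End HarmonicDim.

Lemma has_dim_harmonic (R : numFieldType) d j : (0 < d)%N ->
  has_dim (@harmonic_homog R d j) (nsrc d j - ntgt d j).
Proof.
move=> d0; rewrite -(rank_laplacian_mx R j d0).
exact: has_dim_kermx (@src_free R d j) (@harmonic_homogP R d j).
Qed.

Lemma nsrcE k j : nsrc k.+1 j = 'C(k + j, k).
Proof. by rewrite /nsrc card_mdeg_eq. Qed.

Lemma ntgtE k j : ntgt k.+1 j.+2 = 'C(k + j, k).
Proof. by rewrite /ntgt -(@card_mdeg_eq k j.+3 j) //; lia. Qed.

Lemma ntgt_small d j : (j < 2)%N -> ntgt d j = 0%N.
Proof. by case: j => [|[]] // _; apply: eq_card0 => m; rewrite unfold_in /tgt_mono. Qed.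

Lemma bin_addC a b : 'C(a + b, a) = 'C(a + b, b).
Proof. by rewrite -[RHS]bin_sub ?leq_addl // addnK. Qed.

Lemma dimH0 (R : realType) k : dimH R 0 k.+1 = 1%N.
Proof.
rewrite (dimH_eq (has_dim_harmonic R 0 (ltn0Sn k))).
by rewrite nsrcE ntgt_small // addn0 binn.
Qed.

Lemma dimHS (R : realType) i k :
  dimH R i.+1 k.+2 = ('C(k + i.+1, i.+1) + 'C(k + i, i))%N.
Proof.
rewrite (dimH_eq (has_dim_harmonic R i.+1 (ltn0Sn k.+1))) nsrcE bin_addC.
case: i => [|i]; first by rewrite ntgt_small // subn0 !bin1 bin0; lia.
rewrite ntgtE bin_addC.
have -> : (k.+1 + i.+2 = (k + i.+1).+2)%N by lia.
have -> : (k.+1 + i = k + i.+1)%N by lia.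
have -> : (k + i.+2 = (k + i.+1).+1)%N by lia.
move: (k + i.+1)%N => N; rewrite !binS; lia.
Qed.

Lemma big_ord_half (V : nmodType) n m (F : nat -> V) :
  (n./2 < m)%N -> (forall i, (n < 2 * i)%N -> F i = 0) ->
  \sum_(i < m) F i = \sum_(i < n./2.+1) F i.
Proof.
move=> hm F0; rewrite (big_ord_widen m F hm) [RHS]big_mkcond.
apply: eq_bigr => i _; case: ifP => // /negbT.
by rewrite -leqNgt ltn_half_double -mul2n => /F0.
Qed.

Section ChebyshevU.
Variables (R : comNzRingType) (X : R).

Definition chebU_term (n j : nat) : R :=
  (-1) ^+ j * 'C(n - j, j)%:R * X ^+ (n - 2 * j).

(* [chebU n] is U_n(X / 2), for U_n the Chebyshev polynomial of the second kind. *)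
Definition chebU (n : nat) : R := \sum_(j < n.+1) chebU_term n j.

Lemma chebU_term_eq0 n j : (n < 2 * j)%N -> chebU_term n j = 0.
Proof. by move=> h; rewrite /chebU_term bin_small ?mulr0 ?mul0r //; lia. Qed.

Lemma chebU_term0 n : chebU_term n 0 = X ^+ n.
Proof. by rewrite /chebU_term !subn0 bin0 expr0 !mul1r. Qed.

Lemma chebU_termSS n j : (j <= n.+1)%N ->
  chebU_term n.+2 j.+1 = X * chebU_term n.+1 j.+1 - chebU_term n j.
Proof.
move=> hj; case: (leqP j n) => hjn; last first.
  have -> : j = n.+1 by lia.
  by rewrite !chebU_term_eq0 ?mulr0 ?subr0 //; lia.
rewrite /chebU_term.
have -> : (n.+2 - j.+1 = (n - j).+1)%N by lia.
have -> : (n.+1 - j.+1 = n - j)%N by lia.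
have -> : (n.+2 - 2 * j.+1 = n - 2 * j)%N by lia.
rewrite binS natrD exprS.
case: (ltnP (2 * j) n) => h2; last by rewrite (@bin_small (n - j) j.+1); [ring | lia].
have -> : (n.+1 - 2 * j.+1 = n - (2 * j).+1)%N by lia.
by rewrite -(subnSK h2) exprS; ring.
Qed.

Lemma chebU_rec n : chebU n.+2 = X * chebU n.+1 - chebU n.
Proof.
rewrite /chebU big_ord_recl [in X * _]big_ord_recl big_ord_recr /=.
rewrite (@chebU_term_eq0 n.+2 n.+2) ?addr0 ?chebU_term0; last lia.
rewrite mulrDr -exprS -addrA; congr (_ + _).
rewrite mulr_sumr -sumrB; apply: eq_bigr => j _.
exact: chebU_termSS (ltnW (ltn_ord j)).
Qed.

Lemma chebU_half n : chebU n = \sum_(j < n./2.+1) chebU_term n j.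
Proof.
apply: big_ord_half => [|j /chebU_term_eq0 //].
by rewrite ltnS leq_half_double; lia.
Qed.

Lemma chebU_sub n : chebU n.+2 - chebU n =
  X ^+ n.+2 + \sum_(i < n./2.+1)
    (-1) ^+ i.+1 * ('C(n.+1 - i, i.+1) + 'C(n - i, i))%:R * X ^+ (n - 2 * i).
Proof.
rewrite !chebU_half big_ord_recl chebU_term0 -addrA -sumrB.
congr (_ + _); apply: eq_bigr => i _; rewrite /chebU_term /= natrD exprS.
have -> : (n.+2 - i.+1 = n.+1 - i)%N by lia.
have -> : (n.+2 - 2 * i.+1 = n - 2 * i)%N by lia.
ring.
Qed.

End ChebyshevU.

Lemma expr_addV_chebU (F : fieldType) (x : F) n : x != 0 ->
  x ^+ n.+2 + (x ^+ n.+2)^-1 = chebU (x + x^-1) n.+2 - chebU (x + x^-1) n.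
Proof.
move=> x0; set X := x + x^-1.
have chebU0 : chebU X 0 = 1 by rewrite /chebU big_ord1 chebU_term0.
have chebU1 : chebU X 1 = X.
  by rewrite /chebU big_ord_recl big_ord1 chebU_term0 chebU_term_eq0 // addr0.
have Vrec m : x ^+ m.+2 + (x ^+ m.+2)^-1 =
    X * (x ^+ m.+1 + (x ^+ m.+1)^-1) - (x ^+ m + (x ^+ m)^-1).
  by rewrite /X !exprS; field; rewrite expf_neq0 ?x0.
suff : x ^+ n.+2 + (x ^+ n.+2)^-1 = chebU X n.+2 - chebU X n /\
       x ^+ n.+3 + (x ^+ n.+3)^-1 = chebU X n.+3 - chebU X n.+1 by case.
elim: n => [|n [IH1 IH2]].
  rewrite !(chebU_rec X 1) !(chebU_rec X 0) chebU0 chebU1 /X.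
  by split; field; rewrite ?expf_neq0 ?x0.
by split=> //; rewrite Vrec IH1 IH2 !(chebU_rec X n.+2) (chebU_rec X n); ring.
Qed.

Theorem lemma3p4 (R : realType) (l : nat) (hl : (1 <= l)%N) (x : R) (hx : x != 0) :
  x ^+ l + (x ^+ l)^-1 =
  \sum_(j < l./2.+1)
     (-1) ^+ j * ((dimH R j (l + 2 - 2 * j))%:R : R) * (x + x^-1) ^+ (l - 2 * j).
Proof.
case: l hl => [//|[_|n _]].
  by rewrite big_ord1 /= dimH0 expr0 !mul1r !expr1.
rewrite expr_addV_chebU // chebU_sub [RHS]big_ord_recl /= muln0 !subn0 addn2.
rewrite dimH0 expr0 !mul1r.
congr (_ + _); apply: eq_bigr => i _; rewrite -[bump 0 i]/(i.+1).
have hi : (2 * i <= n)%N by rewrite mul2n -geq_half_double -ltnS.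
have -> : (n.+4 - 2 * i.+1 = (n - 2 * i).+2)%N by lia.
have -> : (n.+2 - 2 * i.+1 = n - 2 * i)%N by lia.
rewrite dimHS; congr (_ * _%:R * _).
by congr (_ + _)%N; congr 'C(_, _); lia.
Qed.
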